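(* Let $r>1$ be an integer and let $M$ be the sub-add move matrix. For every $0\le i\le 2r-1$ and every vertex $(2^{\lfloor i/2\rfloor}x,2^{\lfloor i/2\rfloor}y)\in\mathcal P_i$ (with $x,y$ integers), the vertex $(2^{\lfloor i/2\rfloor}(x-y),2^{\lfloor i/2\rfloor}(x+y))\in\mathcal P_{i+1}$ has exactly two parents in $\Gamma_{M,\,2^r}$.
   Context: The sub-add move matrix is $M=\begin{pmatrix}1&-1\\1&1\end{pmatrix}$. For $n\in\mathbb N$, $\Gamma_{M,\,n}$ is the directed graph with vertex set $\mathbb Z_n^2$ and arcs $((a,b),(a-b,a+b))$ for all $(a,b)\in\mathbb Z_n^2$ (computed mod $n$; loops allowed). If $({\bf v},{\bf w})$ is an arc, ${\bf v}$ is a parent of ${\bf w}$ (in particular $(0,0)$ is a parent of itself). For $n=2^r$: for $0\le t\le r-1$, $\mathcal P_{2t}$ is the set of pairs $(2^tx,2^ty)\in\mathbb Z_{2^r}^2$ with $x,y$ integers exactly one of which is odd, and $\mathcal P_{2t+1}$ is the set of pairs $(2^tx,2^ty)$ with $x,y$ both odd; $\mathcal P_{2r}=\{(0,0)\}$. These sets partition $\mathbb Z_{2^r}^2$. *)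

From HB Require Import structures.
From mathcomp Require Import all_boot all_order all_algebra.
Set Implicit Arguments. Unset Strict Implicit. Unset Printing Implicit Defensive.
Import Order.TTheory GRing.Theory Num.Theory.
Local Open Scope ring_scope.

(* Vertex set Z_{2^r}^2 (used with r > 1, so 'Z_(2^r) is really Z/2^rZ). *)
Definition vert (r : nat) : finType := ('Z_(2 ^ r) * 'Z_(2 ^ r))%type.

Definition zc (r : nat) (z : int) : 'Z_(2 ^ r) := z%:~R.

Definition subadd (r : nat) (v : vert r) : vert r := (v.1 - v.2, v.1 + v.2).

Definition arc (r : nat) (v w : vert r) : bool := subadd v == w.

Definition parents (r : nat) (w : vert r) : {set vert r} := [set v | arc v w].

Definition oddz (x : int) : bool := ~~ (2 %| x)%Z.

Definition inP (r i : nat) (v : vert r) : Prop :=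
  if (i < 2 * r)%N then
    let t := i./2 in
    exists x y : int,
      v = (zc r ((2 ^ t)%:Z * x), zc r ((2 ^ t)%:Z * y)) /\
      (if odd i then oddz x && oddz y else oddz x (+) oddz y)
  else v = (0, 0).

From Pilot Require Import Defs.
From HB Require Import structures.
From mathcomp Require Import all_boot all_order all_algebra.
From mathcomp Require Import zify ring.
Import Order.TTheory GRing.Theory Num.Theory.
Local Open Scope ring_scope.

(* The move w |-> M w is additive, so the parents of M v form the coset
   v + ker M, and ker M = {(d, d) | 2 d = 0} has two elements in Z/2^r.
   For the classes: if exactly one of x, y is odd then x - y and x + y are
   both odd; if both are odd then x - y = 2a and x + y = 2b with a + b = x
   odd, so exactly one of a, b is odd, and 2^(t+1) (a, b) vanishes when
   t + 1 = r. *)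

Lemma Zp_two_torsion (n : nat) : (1 < n)%N -> ~~ odd n ->
  [set d : 'Z_n | d + d == 0] = [set 0; (n./2)%:R].
Proof.
move=> n_gt1 n_even; apply/setP => d; rewrite !inE -!val_eqE /= val_Zp_nat //.
have := ltn_ord d; move: (d : nat) => m; rewrite Zp_cast // => m_lt_n.
have := odd_double_half n; rewrite (negbTE n_even) add0n -muln2; move: n./2 => k n_half.
rewrite (modn_small (_ : k < n)%N); last by lia.
have [lt_mm_n | le_n_mm] := ltnP (m + m) n; first by rewrite modn_small //; lia.
rewrite -(subnK le_n_mm) modnDr modn_small; lia.
Qed.

Lemma card_Zp_two_torsion (n : nat) : (1 < n)%N -> ~~ odd n ->
  #|[set d : 'Z_n | d + d == 0]| = 2%N.
Proof.
move=> n_gt1 n_even; rewrite Zp_two_torsion // cards2 -val_eqE /= val_Zp_nat //.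
have := odd_double_half n; rewrite (negbTE n_even) add0n -muln2; move: n./2 => k n_half.
rewrite modn_small; lia.
Qed.

Lemma parents_subadd (r : nat) (v : vert r) :
  parents (subadd v) = [set (d + v.1, d + v.2) | d in [set d : 'Z_(2 ^ r) | d + d == 0]].
Proof.
apply/setP => -[p q]; rewrite inE /Defs.arc /subadd /= xpair_eqE.
apply/andP/imsetP => [[/eqP e1 /eqP e2] | [d]].
- exists (p - v.1); rewrite ?inE.
  + have -> : (p - v.1) + (p - v.1) = (p - q - (v.1 - v.2)) + (p + q - (v.1 + v.2)) by ring.
    by rewrite e1 e2 !subrr addr0.
  + congr (_, _); first by rewrite subrK.
    have -> : p - v.1 + v.2 = p - (v.1 - v.2) by ring.
    by rewrite -e1; ring.
- rewrite inE => /eqP dd [-> ->]; split; apply/eqP; first by ring.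
  by rewrite addrACA dd add0r.
Qed.

Lemma exp2_gt1 (r : nat) : (0 < r)%N -> (1 < 2 ^ r)%N.
Proof. by move=> r_gt0; apply: leq_ltn_trans r_gt0 (ltn_expl r (ltnSn 1)). Qed.

Lemma card_parents_subadd (r : nat) (v : vert r) : (0 < r)%N -> #|parents (subadd v)| = 2%N.
Proof.
move=> r_gt0; rewrite parents_subadd card_imset; last by move=> d d' /(congr1 fst) /addIr.
by rewrite card_Zp_two_torsion ?exp2_gt1 // oddX orbF -lt0n.
Qed.

Lemma subadd_zc (r : nat) (x y : int) :
  subadd (zc r x, zc r y) = (zc r (x - y), zc r (x + y)).
Proof. by rewrite /subadd /zc /= rmorphB rmorphD. Qed.

Lemma zc_pow2r_mul (r : nat) (k : int) : (0 < r)%N -> zc r ((2 ^ r)%:Z * k) = 0.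
Proof. by move=> r_gt0; rewrite /zc rmorphM /= -pmulrn pchar_Zp ?exp2_gt1 ?mul0r. Qed.

Lemma inP_subadd (r i : nat) (v : vert r) :
  (0 < r)%N -> (i < 2 * r)%N -> @inP r i v -> @inP r i.+1 (subadd v).
Proof.
rewrite /inP => r_gt0 lt_i_2r; rewrite lt_i_2r => -[x [y [-> par_xy]]].
rewrite subadd_zc -!mulrBr -!mulrDr [i.+1./2]/= uphalf_half /=.
have := odd_double_half i; move: (i./2) => t.
case: (odd i) in par_xy * => /= i_eq; rewrite /oddz in par_xy *; last first.
  have -> : (i.+1 < 2 * r)%N by lia.
  by exists (x - y), (x + y); rewrite add0n; split => //; lia.
have [a xy_sub] : exists a, x - y = 2 * a by exists ((x - y) %/ 2)%Z; lia.
have [b xy_add] : exists b, x + y = 2 * b by exists ((x + y) %/ 2)%Z; lia.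
rewrite xy_sub xy_add !mulrA -PoszM -expnSr add1n.
case: ifP => [_ | ge_2r]; first by exists a, b; split => //; lia.
have -> : t.+1 = r by lia.
by rewrite !zc_pow2r_mul.
Qed.

Theorem proposition5p4 (r : nat) (hr : (1 < r)%N) (i : nat) (hi : (i <= 2 * r - 1)%N)
  (x y : int) :
  @inP r i (zc r ((2 ^ i./2)%:Z * x), zc r ((2 ^ i./2)%:Z * y)) ->
  @inP r i.+1 (zc r ((2 ^ i./2)%:Z * (x - y)), zc r ((2 ^ i./2)%:Z * (x + y))) /\
  #|parents (zc r ((2 ^ i./2)%:Z * (x - y)), zc r ((2 ^ i./2)%:Z * (x + y)))| = 2%N.
Proof.
set v : vert r := (zc r ((2 ^ i./2)%:Z * x), zc r ((2 ^ i./2)%:Z * y)).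
have <- : subadd v = (zc r ((2 ^ i./2)%:Z * (x - y)), zc r ((2 ^ i./2)%:Z * (x + y))).
  by rewrite subadd_zc mulrBr mulrDr.
have r_gt0 : (0 < r)%N by exact: ltnW.
move=> v_in_Pi; split; last exact: card_parents_subadd.
by apply: inP_subadd => //; lia.
Qed.
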